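(* Let $\alpha$ be a hybrid program, $S\subseteq \mathrm{VAR}(\alpha)$ a set of sensor variables, and $o_1,o_2:S\to\mathbb{R}_{\ge0}$ offset functions with $o_1(s)\le o_2(s)$ for all $s\in S$. Let $r,r_1,r_2\in\mathbb{R}$ and formulas $\phi_{pre},\phi_{post}$ be such that $\alpha$ is forward $r$-safe, $\alpha_{S,o_1}$ is forward $r_1$-safe, and $\alpha_{S,o_2}$ is forward $r_2$-safe, each for $\phi_{pre}$ and $\phi_{post}$. Then $r_2\le r_1\le r$.
   Context: Fix a set $V$ of real-valued variables; a state is a map $\omega:V\to\mathbb{R}$, $\mathcal{S}$ the set of states. Hybrid programs: $x:=\theta$, $x:=*$, $x'=\theta\,\&\,Q$, $?\phi$, $\alpha;\beta$, $\alpha\cup\beta$, $\alpha^*$, with the standard relational semantics $[\![\alpha]\!]\subseteq\mathcal{S}\times\mathcal{S}$ of differential dynamic logic (assignment updates one variable; $x:=*$ sets $x$ to an arbitrary real; $x'=\theta\,\&\,Q$ follows a solution of the ODE for some duration $r\ge0$ staying in $[\![Q]\!]$ throughout; test, relational composition, union, reflexive-transitive closure). Formulas of dL (comparisons, $\neg,\wedge,\forall$, $[\alpha]\phi$) have semantics $[\![\phi]\!]\subseteq\mathcal{S}$. $[\![\mathrm{SP}(\alpha,\phi)]\!]=\{\nu\mid\exists\omega\in[\![\phi]\!],(\omega,\nu)\in[\![\alpha]\!]\}$. $\mathrm{VAR}(\alpha)$ is the set of variables of $\alpha$ (its free and bound variables). Distance: $d(\omega,\nu)=\sqrt{\sum_{x\in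 V}(\omega(x)-\nu(x))^2}$; for $X\subseteq\mathcal{S}$, $\mathrm{Dist}(\omega,X)=\inf\{d(\omega,\nu)\mid\nu\notin X\}$ if $\omega\in X$ and $-\inf\{d(\omega,\nu)\mid\nu\in X\}$ if $\omega\notin X$ (infima in $\mathbb{R}\cup\{\pm\infty\}$, $\inf\emptyset=\infty$). $\alpha$ is forward $r$-safe for $\phi_{pre}$ and $\phi_{post}$ if $r=\inf\{\mathrm{Dist}(\nu,[\![\phi_{post}]\!])\mid\nu\in[\![\mathrm{SP}(\alpha,\phi_{pre})]\!]\}$. Sensor modeling: each sensor variable $q_s$ has an associated physical variable $q_p$, and (modeling convention) sensor reads are assignments $q_s:=q_p$. Bounded sensor attack: for $S\subseteq\mathrm{VAR}(\alpha)$ and $o:S\to\mathbb{R}_{\ge0}$, $\alpha_{S,o}$ is the program obtained from $\alpha$ by replacing every assignment to a variable $q_s\in S$ with $q_s:=*\,;\ ?(q_s\ge q_p-o(q_s)\wedge q_s\le q_p+o(q_s))$. *)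

From Stdlib Require Import Reals List ClassicalEpsilon.
From Coquelicot Require Import Coquelicot.
Open Scope R_scope.

(** A finite set V of variables (finiteness is needed for the Euclidean distance). *)
Record VarSet := {
  var :> Type;
  var_eq_dec : forall x y : var, {x = y} + {x <> y};
  vars : list var;
  vars_nodup : NoDup vars;
  vars_complete : forall x : var, In x vars
}.

Section DL.
Variable V : VarSet.

Definition state := V -> R.

Inductive term :=
| TVar (x : V)
| TConst (c : R)
| TNeg (t : term)
| TPlus (t1 t2 : term)
| TMult (t1 t2 : term).

Inductive formula :=
| FEq (t1 t2 : term)
| FLe (t1 t2 : term)
| FLt (t1 t2 : term)
| FNot (p : formula)
| FAnd (p q : formula)
| FForall (x : V) (p : formula)
| FBox (a : program) (p : formula)
with program :=
| PAssign (x : V) (t : term)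
| PAssignAny (x : V)
| PODE (x : V) (t : term) (q : formula)
| PTest (p : formula)
| PSeq (a b : program)
| PChoice (a b : program)
| PStar (a : program).

Definition upd (w : state) (x : V) (r : R) : state :=
  fun y => if var_eq_dec V y x then r else w y.

Fixpoint teval (t : term) (w : state) : R :=
  match t with
  | TVar x => w x
  | TConst c => c
  | TNeg t => - teval t w
  | TPlus t1 t2 => teval t1 w + teval t2 w
  | TMult t1 t2 => teval t1 w * teval t2 w
  end.

Inductive rtc (Rel : state -> state -> Prop) : state -> state -> Prop :=
| rtc_refl w : rtc Rel w w
| rtc_step w u v : Rel w u -> rtc Rel u v -> rtc Rel w v.

Definition ode_sem (x : V) (t : term) (Q : state -> Prop)
  (w v : state) : Prop :=
  exists (r : R) (phi : R -> state),
    0 <= r /\ phi 0 = w /\ phi r = v /\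
    (forall s, 0 <= s <= r -> forall y, y <> x -> phi s y = w y) /\
    (forall s, 0 <= s <= r ->
        derivable_pt_lim (fun u => phi u x) s (teval t (phi s))) /\
    (forall s, 0 <= s <= r -> Q (phi s)).

Fixpoint fsem (p : formula) : state -> Prop :=
  match p with
  | FEq t1 t2 => fun w => teval t1 w = teval t2 w
  | FLe t1 t2 => fun w => teval t1 w <= teval t2 w
  | FLt t1 t2 => fun w => teval t1 w < teval t2 w
  | FNot p => fun w => ~ fsem p w
  | FAnd p q => fun w => fsem p w /\ fsem q w
  | FForall x p => fun w => forall r : R, fsem p (upd w x r)
  | FBox a p => fun w => forall v, psem a w v -> fsem p v
  end
with psem (a : program) : state -> state -> Prop :=
  match a with
  | PAssign x t => fun w v => v = upd w x (teval t w)
  | PAssignAny x => fun w v => exists r : R, v = upd w x r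
  | PODE x t q => ode_sem x t (fsem q)
  | PTest p => fun w v => v = w /\ fsem p w
  | PSeq a b => fun w v => exists u, psem a w u /\ psem b u v
  | PChoice a b => fun w v => psem a w v \/ psem b w v
  | PStar a => rtc (psem a)
  end.

Fixpoint FVt (t : term) : V -> Prop :=
  match t with
  | TVar x => fun y => y = x
  | TConst _ => fun _ => False
  | TNeg t => FVt t
  | TPlus t1 t2 | TMult t1 t2 => fun y => FVt t1 y \/ FVt t2 y
  end.

Fixpoint BV (a : program) : V -> Prop :=
  match a with
  | PAssign x _ | PAssignAny x | PODE x _ _ => fun y => y = x
  | PTest _ => fun _ => False
  | PSeq a b | PChoice a b => fun y => BV a y \/ BV b y
  | PStar a => BV a
  end.

Fixpoint MBV (a : program) : V -> Prop :=
  match a with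
  | PAssign x _ | PAssignAny x | PODE x _ _ => fun y => y = x
  | PTest _ => fun _ => False
  | PSeq a b => fun y => MBV a y \/ MBV b y
  | PChoice a b => fun y => MBV a y /\ MBV b y
  | PStar _ => fun _ => False
  end.

Fixpoint FVf (p : formula) : V -> Prop :=
  match p with
  | FEq t1 t2 | FLe t1 t2 | FLt t1 t2 => fun y => FVt t1 y \/ FVt t2 y
  | FNot p => FVf p
  | FAnd p q => fun y => FVf p y \/ FVf q y
  | FForall x p => fun y => FVf p y /\ y <> x
  | FBox a p => fun y => FVp a y \/ (FVf p y /\ ~ MBV a y)
  end
with FVp (a : program) : V -> Prop :=
  match a with
  | PAssign _ t => FVt t
  | PAssignAny _ => fun _ => False
  | PODE x t q => fun y => y = x \/ FVt t y \/ FVf q y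
  | PTest p => FVf p
  | PSeq a b => fun y => FVp a y \/ (FVp b y /\ ~ MBV a y)
  | PChoice a b => fun y => FVp a y \/ FVp b y
  | PStar a => FVp a
  end.

Definition VAR (a : program) : V -> Prop := fun y => FVp a y \/ BV a y.

Definition SP (a : program) (pre : formula) : state -> Prop :=
  fun v => exists w, fsem pre w /\ psem a w v.

Definition dist (w v : state) : R :=
  sqrt (fold_right (fun x acc => (w x - v x) ^ 2 + acc) 0 (vars V)).

(** Signed distance to a set X (infima in the extended reals, inf of empty = +oo). *)
Definition Dist (w : state) (X : state -> Prop) : Rbar :=
  if excluded_middle_informative (X w)
  then Rbar_glb (fun d => exists v, ~ X v /\ d = Finite (dist w v))
  else Rbar_opp (Rbar_glb (fun d => exists v, X v /\ d = Finite (dist w v))).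

Definition forward_safe (a : program) (pre post : formula) (r : R) : Prop :=
  Rbar_is_glb (fun d => exists v, SP a pre v /\ d = Dist v (fsem post)) (Finite r).

(** Bounded sensor attack a_{S,o}: every assignment q := t with q in S becomes
    q := * ; ?(q >= q_p - o(q) /\ q <= q_p + o(q)), where q_p = phys q. *)
Fixpoint attack (S : V -> bool) (phys : V -> V) (o : V -> R) (a : program) : program :=
  match a with
  | PAssign x t =>
      if S x then
        PSeq (PAssignAny x)
             (PTest (FAnd (FLe (TPlus (TVar (phys x)) (TNeg (TConst (o x)))) (TVar x))
                          (FLe (TVar x) (TPlus (TVar (phys x)) (TConst (o x))))))
      else PAssign x t
  | PAssignAny x => PAssignAny x
  | PODE x t q => PODE x t q
  | PTest p => PTest p
  | PSeq a b => PSeq (attack S phys o a) (attack S phys o b)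
  | PChoice a b => PChoice (attack S phys o a) (attack S phys o b)
  | PStar a => PStar (attack S phys o a)
  end.

(** Modeling convention: every assignment to a sensor variable q in S
    (at the program level; tests and evolution domains are not modified by the attack) is the sensor read q := phys q. *)
Fixpoint sensor_conv (S : V -> bool) (phys : V -> V) (a : program) : Prop :=
  match a with
  | PAssign x t => S x = true -> t = TVar (phys x)
  | PAssignAny _ => True
  | PODE _ _ _ | PTest _ => True
  | PSeq a b | PChoice a b => sensor_conv S phys a /\ sensor_conv S phys b
  | PStar a => sensor_conv S phys a
  end.

End DL.

(* An attacked program can always replay the honest behaviour: a sensor read
   [q := q_p] is an admissible value of [q := * ; ?(|q - q_p| <= o q)] for any
   offset [o q >= 0], and widening the offsets only admits more values.  Hence
   [alpha], [alpha_{S,o1}], [alpha_{S,o2}] have increasing transition relations,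
   so increasing strongest postconditions, and the infimum of the distances to
   the postcondition over a larger set is smaller. *)

From Stdlib Require Import Reals Lra.
From Coquelicot Require Import Coquelicot.
Open Scope R_scope.

Section SensorAttack.

Variable V : VarSet.

Definition sem_incl (a b : program V) : Prop :=
  forall w v, psem V a w v -> psem V b w v.

Lemma rtc_mono (R1 R2 : state V -> state V -> Prop) :
  (forall w v, R1 w v -> R2 w v) -> forall w v, rtc V R1 w v -> rtc V R2 w v.
Proof.
  intros H12 w v Hwv; induction Hwv.
  - apply rtc_refl.
  - eapply rtc_step; eauto.
Qed.

Lemma upd_eq (w : state V) (x : V) (r : R) : upd V w x r x = r.
Proof. unfold upd; destruct (var_eq_dec V x x); congruence. Qed.

Lemma upd_preserves_source (w : state V) (x y : V) : upd V w x (w y) y = w y.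
Proof. unfold upd; destruct (var_eq_dec V y x); congruence. Qed.

Lemma sem_incl_attack (S : V -> bool) (phys : V -> V) (o : V -> R) (a : program V) :
  (forall s, S s = true -> 0 <= o s) ->
  sensor_conv V S phys a ->
  sem_incl a (attack V S phys o a).
Proof.
  intros Ho; induction a; simpl; intros Hconv w v Hwv; auto.
  - destruct (S x) eqn:Hx; [|exact Hwv].
    rewrite (Hconv eq_refl) in Hwv; simpl in Hwv; subst v.
    exists (upd V w x (w (phys x))); split; [now exists (w (phys x))|].
    simpl; rewrite upd_eq, upd_preserves_source.
    specialize (Ho x Hx); repeat split; lra.
  - destruct Hconv as [Hconv1 Hconv2], Hwv as [u [Hwu Huv]].
    exists u; split; [apply IHa1 | apply IHa2]; assumption.
  - destruct Hconv as [Hconv1 Hconv2], Hwv as [Hwv | Hwv];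
      [left; apply IHa1 | right; apply IHa2]; assumption.
  - exact (rtc_mono _ _ (IHa Hconv) _ _ Hwv).
Qed.

Lemma sem_incl_attack_offsets (S : V -> bool) (phys : V -> V) (o1 o2 : V -> R)
    (a : program V) :
  (forall s, S s = true -> o1 s <= o2 s) ->
  sem_incl (attack V S phys o1 a) (attack V S phys o2 a).
Proof.
  intros Ho; induction a; simpl; intros w v Hwv; auto.
  - destruct (S x) eqn:Hx; [|exact Hwv].
    specialize (Ho x Hx); simpl in *.
    destruct Hwv as [u [Hwu [-> [Hlo Hhi]]]].
    exists u; repeat split; auto; lra.
  - destruct Hwv as [u [Hwu Huv]].
    exists u; split; [apply IHa1 | apply IHa2]; assumption.
  - destruct Hwv as [Hwv | Hwv]; [left; apply IHa1 | right; apply IHa2]; assumption.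
  - exact (rtc_mono _ _ IHa _ _ Hwv).
Qed.

Lemma forward_safe_sem_incl (a b : program V) (pre post : formula V) (ra rb : R) :
  sem_incl a b ->
  forward_safe V a pre post ra -> forward_safe V b pre post rb ->
  rb <= ra.
Proof.
  intros Hab Ha Hb.
  refine (Rbar_is_glb_subset _ _ (Finite rb) (Finite ra) _ Hb Ha).
  intros d [v [[w [Hpre Hwv]] ->]].
  exists v; split; [exists w|]; auto.
Qed.

End SensorAttack.

Theorem theorem1 (V : VarSet) (alpha : program V) (S : V -> bool) (phys : V -> V)
  (o1 o2 : V -> R) (r r1 r2 : R) (pre post : formula V) :
  (forall s, S s = true -> VAR V alpha s) ->
  sensor_conv V S phys alpha ->
  (forall s, S s = true -> 0 <= o1 s /\ 0 <= o2 s /\ o1 s <= o2 s) ->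
  forward_safe V alpha pre post r ->
  forward_safe V (attack V S phys o1 alpha) pre post r1 ->
  forward_safe V (attack V S phys o2 alpha) pre post r2 ->
  r2 <= r1 <= r.
Proof.
  (* [S] need not consist of variables of [alpha]: other sensors are never attacked. *)
  intros _ Hconv Ho Hsafe Hsafe1 Hsafe2.
  assert (Hattack : sem_incl V alpha (attack V S phys o1 alpha))
    by (apply sem_incl_attack; [intros s Hs; apply Ho |]; assumption).
  assert (Hwiden : sem_incl V (attack V S phys o1 alpha) (attack V S phys o2 alpha))
    by (apply sem_incl_attack_offsets; intros s Hs; apply Ho, Hs).
  split.
  - exact (forward_safe_sem_incl _ _ _ _ _ _ _ Hwiden Hsafe1 Hsafe2).
  - exact (forward_safe_sem_incl _ _ _ _ _ _ _ Hattack Hsafe Hsafe1).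
Qed.
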